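(* Let $k$ be a commutative ring over which every finitely generated projective module is free, and let $A$ be a $k$-linear semi-Hopf category (i.e. a semi-Hopf $\mathcal V$-category for $\mathcal V=\mathsf{Mod}_k$) with object set $X$ such that each $A_{x,y}$ is finitely generated projective (hence free of finite rank), and such that for all $x,y\in X$ with $A_{x,y}\neq0$ the ranks of $A_{x,y}$ and $A_{y,y}$ coincide. If $s=\{s_{xy}\}$ is a right antipode of $A$, then $s$ is also a left antipode, hence an antipode, and $A$ is a Hopf category.
   Context: $\mathsf{Mod}_k$ has the usual tensor product and symmetry. A $k$-linear category $A$ with object set $X$: $k$-modules $A_{x,y}$, $k$-bilinear compositions $m_{xyz}\colon A_{x,y}\otimes A_{y,z}\to A_{x,z}$ and units $j_x\colon k\to A_{x,x}$, associative and unital. Semi-Hopf: each $A_{x,y}$ is a $k$-coalgebra $(\delta_{xy},\epsilon_{xy})$ and all $m_{xyz},j_x$ are coalgebra morphisms. Right antipode: $k$-linear maps $s_{xy}\colon A_{x,y}\to A_{y,x}$ with $m_{xyx}\circ(1\otimes s_{xy})\circ\delta_{xy}=j_x\circ\epsilon_{xy}$ (in Sweedler notation $a_{(1)}s_{xy}(a_{(2)})=\epsilon_{xy}(a)1_x$); left antipode: $m_{yxy}\circ(s_{xy}\otimes1)\circ\delta_{xy}=j_y\circ\epsilon_{xy}$; antipode: both. *)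

From HB Require Import structures.
From mathcomp Require Import all_boot all_order all_algebra.
Set Implicit Arguments. Unset Strict Implicit. Unset Printing Implicit Defensive.
Import GRing.Theory.
Local Open Scope ring_scope.

Section Defs.
Variable k : comPzRingType.

Definition klinear (M N : lmodType k) (f : M -> N) : Prop :=
  forall (c : k) (u v : M), f (c *: u + v) = c *: f u + f v.
Definition kform (M : lmodType k) (f : M -> k) : Prop :=
  forall (c : k) (u v : M), f (c *: u + v) = c * f u + f v.
Definition kbilinear (M N P : lmodType k) (b : M -> N -> P) : Prop :=
  (forall u, klinear (b u)) /\ (forall v, klinear (fun u => b u v)).
Definition ktrilinear (M N O P : lmodType k) (t : M -> N -> O -> P) : Prop :=
  (forall u v, klinear (t u v)) /\ (forall u w, klinear (fun v => t u v w))
  /\ (forall v w, klinear (fun u => t u v w)).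

(* Elements of M (x) N are represented by finite lists of pure tensors
   [:: (m1,n1); ...] standing for m1 (x) n1 + ...; two lists represent the
   same element iff every bilinear map takes the same value on them
   (universal property of the tensor product). Same for M (x) N (x) O. *)
Definition tensor_eq (M N : lmodType k) (s t : seq (M * N)) : Prop :=
  forall (P : lmodType k) (b : M -> N -> P), kbilinear b ->
    \sum_(p <- s) b p.1 p.2 = \sum_(p <- t) b p.1 p.2.
Definition tensor3_eq (M N O : lmodType k) (s t : seq (M * N * O)) : Prop :=
  forall (P : lmodType k) (b : M -> N -> O -> P), ktrilinear b ->
    \sum_(p <- s) b p.1.1 p.1.2 p.2 = \sum_(p <- t) b p.1.1 p.1.2 p.2.

(* finitely generated projective = direct summand of some k^n *)
Definition fg_projective (M : lmodType k) : Prop :=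
  exists n (f : 'rV[k]_n -> M) (g : M -> 'rV[k]_n),
    klinear f /\ klinear g /\ cancel g f.
Definition free_of_rank (M : lmodType k) (n : nat) : Prop :=
  exists f : 'rV[k]_n -> M, klinear f /\ bijective f.
Definition fgproj_free : Prop :=
  forall M : lmodType k, fg_projective M -> exists n, free_of_rank M n.

Section Cat.
Variables (X : Type) (A : X -> X -> lmodType k).
(* composition m_{xyz} (as a bilinear map), units j_x(1) = unit x *)
Variables (m : forall x y z, A x y -> A y z -> A x z) (unit : forall x, A x x).
Variables (delta : forall x y, A x y -> seq (A x y * A x y))
          (eps : forall x y, A x y -> k).

Definition is_kcategory : Prop :=
  [/\ forall x y z, kbilinear (@m x y z),
      forall x y z w (a : A x y) (b : A y z) (c : A z w),
        m (m a b) c = m a (m b c),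
      forall x y (a : A x y), m (unit x) a = a &
      forall x y (a : A x y), m a (unit y) = a].

Definition is_coalgebra (M : lmodType k) (d : M -> seq (M * M)) (e : M -> k)
  : Prop :=
  [/\ forall (c : k) (a b : M),
        tensor_eq (d (c *: a + b))
          ([seq (c *: p.1, p.2) | p <- d a] ++ d b),
      kform e,
      forall a, tensor3_eq
        [seq (q.1, q.2, p.2) | p <- d a, q <- d p.1]
        [seq (p.1, q.1, q.2) | p <- d a, q <- d p.2],
      forall a, \sum_(p <- d a) e p.1 *: p.2 = a &
      forall a, \sum_(p <- d a) e p.2 *: p.1 = a].

Definition is_semiHopf_category : Prop :=
  [/\ is_kcategory /\ forall x y, is_coalgebra (@delta x y) (@eps x y),
      forall x y z (a : A x y) (b : A y z),
        tensor_eq (delta (m a b))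
          [seq (m p.1 q.1, m p.2 q.2) | p <- delta a, q <- delta b],
      forall x y z (a : A x y) (b : A y z), eps (m a b) = eps a * eps b,
      forall x, tensor_eq (delta (unit x)) [:: (unit x, unit x)] &
      forall x, eps (unit x) = 1].

Definition is_right_antipode (s : forall x y, A x y -> A y x) : Prop :=
  (forall x y, klinear (@s x y)) /\
  forall x y (a : A x y),
    \sum_(p <- delta a) m p.1 (s _ _ p.2) = eps a *: unit x.

Definition is_left_antipode (s : forall x y, A x y -> A y x) : Prop :=
  (forall x y, klinear (@s x y)) /\
  forall x y (a : A x y),
    \sum_(p <- delta a) m (s _ _ p.1) p.2 = eps a *: unit y.

Definition is_antipode s := is_right_antipode s /\ is_left_antipode s.

Definition is_Hopf_category : Prop :=
  is_semiHopf_category /\ exists s, is_antipode s.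

End Cat.
End Defs.

From HB Require Import structures.
From mathcomp Require Import all_boot all_order all_algebra.
From Stdlib Require Import FunctionalExtensionality Classical.
Set Implicit Arguments. Unset Strict Implicit. Unset Printing Implicit Defensive.
Import GRing.Theory.
Local Open Scope ring_scope.

(* Fix objects x, y and consider the two k-linear operators
     L : Hom(A_xy, A_yy) -> Hom(A_xy, A_xy),   L g a = sum a(1) g(a(2)),
     S : Hom(A_xy, A_xy) -> Hom(A_xy, A_yy),   S h a = sum s(a(1)) h(a(2)).
   Coassociativity and the right antipode axiom give L (S h) = h, so S is a
   right inverse of L.  When A_xy and A_yy are free of the same rank n, both
   Hom-modules are free of rank n*n; in coordinates L and S become
   endomorphisms of k^(n*n) with L o S = id, and over a commutative ring this
   forces S o L = id (a square matrix with a right inverse is invertible).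
   Applying S o L = id to g = eps(-) 1_y, for which L g = id, yields
   S id = eps(-) 1_y, i.e. the left antipode identity on A_xy.  If A_xy = 0
   that identity holds trivially. *)

Section LinearMaps.
Variable k : comPzRingType.

Lemma klinear0 (M N : lmodType k) (f : M -> N) : klinear f -> f 0 = 0.
Proof.
move=> Hf; have := Hf 1 0 0; rewrite !scale1r addr0.
by move=> /(congr1 (fun t => t - f 0)) /=; rewrite subrr addrK => <-.
Qed.

Lemma klinearD (M N : lmodType k) (f : M -> N) :
  klinear f -> forall u v, f (u + v) = f u + f v.
Proof. by move=> Hf u v; have := Hf 1 u v; rewrite !scale1r. Qed.

Lemma klinearZ (M N : lmodType k) (f : M -> N) :
  klinear f -> forall c u, f (c *: u) = c *: f u.
Proof. by move=> Hf c u; have := Hf c u 0; rewrite !addr0 (klinear0 Hf) addr0. Qed.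

Lemma klinear_sum (M N : lmodType k) (f : M -> N) : klinear f ->
  forall I (r : seq I) (F : I -> M),
    f (\sum_(i <- r) F i) = \sum_(i <- r) f (F i).
Proof. by move=> Hf I r F; apply: (big_morph f (klinearD Hf) (klinear0 Hf)). Qed.

Lemma klinear_comp (M N P : lmodType k) (f : M -> N) (g : N -> P) :
  klinear f -> klinear g -> klinear (fun u => g (f u)).
Proof. by move=> Hf Hg c u v; rewrite Hf Hg. Qed.

Lemma kform0 (M : lmodType k) (f : M -> k) : kform f -> f 0 = 0.
Proof.
move=> Hf; have := Hf 1 0 0; rewrite !scale1r addr0 mul1r.
by move=> /(congr1 (fun t => t - f 0)) /=; rewrite subrr addrK => <-.
Qed.

Lemma klinear_mulmx n p (M : 'M[k]_(n, p)) : klinear (fun u : 'rV[k]_n => u *m M).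
Proof. by move=> c u v; rewrite mulmxDl scalemxAl. Qed.

Lemma free_coordinates (V : lmodType k) n (f : 'rV[k]_n -> V) :
  klinear f -> bijective f ->
  exists g, [/\ klinear g, cancel f g & cancel g f].
Proof.
move=> Hf [g fg gf]; exists g; split => // c u v.
by rewrite -{1}(gf u) -{1}(gf v) -Hf fg.
Qed.

Definition matrix_of n p (f : 'rV[k]_n -> 'rV[k]_p) : 'M[k]_(n, p) :=
  \matrix_(i < n) f (delta_mx 0 i).

Lemma matrix_ofE n p (f : 'rV[k]_n -> 'rV[k]_p) :
  klinear f -> forall v, f v = v *m matrix_of f.
Proof.
move=> Hf v; rewrite mulmx_sum_row {1}(row_sum_delta v) (klinear_sum Hf).
by apply: eq_bigr => i _; rewrite (klinearZ Hf) rowK.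
Qed.

(* Over a commutative ring a right inverse of an endomorphism of k^n is a
   two-sided inverse (AB = 1 implies BA = 1 for square matrices). *)
Lemma square_right_inverse n (T U : 'rV[k]_n -> 'rV[k]_n) :
  klinear T -> klinear U -> cancel U T -> cancel T U.
Proof.
move=> HT HU TU.
have UT1 : matrix_of U *m matrix_of T = 1%:M.
  apply/row_matrixP => i; rewrite !rowE mulmxA -(matrix_ofE HU) -(matrix_ofE HT).
  by rewrite TU mulmx1.
by move=> v; rewrite (matrix_ofE HT) (matrix_ofE HU) -mulmxA (mulmx1C UT1) mulmx1.
Qed.
End LinearMaps.

(* Coordinates on Hom(V, W) for V free of rank n and W free of rank r:
   a linear map h corresponds to the row vector of its n x r matrix. *)
Section HomCoordinates.
Variables (k : comPzRingType) (V W : lmodType k) (n r : nat).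
Variables (fV : 'rV[k]_n -> V) (gV : V -> 'rV[k]_n)
          (fW : 'rV[k]_r -> W) (gW : W -> 'rV[k]_r).
Hypotheses (HfV : klinear fV) (HgV : klinear gV)
           (fVK : cancel fV gV) (gVK : cancel gV fV)
           (HfW : klinear fW) (HgW : klinear gW)
           (fWK : cancel fW gW) (gWK : cancel gW fW).

Definition hom_of_vec (v : 'rV[k]_(n * r)) : V -> W :=
  fun a => fW (gV a *m vec_mx v).

Definition vec_of_hom (h : V -> W) : 'rV[k]_(n * r) :=
  mxvec (\matrix_(i < n) gW (h (fV (delta_mx 0 i)))).

Lemma hom_of_vec_linear v : klinear (hom_of_vec v).
Proof. exact: klinear_comp (klinear_comp HgV (klinear_mulmx _)) HfW. Qed.

Lemma hom_of_vecD c v w :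
  hom_of_vec (c *: v + w) = fun a => c *: hom_of_vec v a + hom_of_vec w a.
Proof.
apply: functional_extensionality => a; rewrite /hom_of_vec -HfW.
by rewrite linearP /= mulmxDr scalemxAr.
Qed.

Lemma vec_of_homD c h1 h2 :
  vec_of_hom (fun a => c *: h1 a + h2 a) = c *: vec_of_hom h1 + vec_of_hom h2.
Proof.
rewrite /vec_of_hom -linearP /=; congr mxvec.
by apply/row_matrixP => i; rewrite linearP /= !rowK HgW.
Qed.

Lemma vec_of_homK h : klinear h -> hom_of_vec (vec_of_hom h) = h.
Proof.
move=> Hh; apply: functional_extensionality => a; rewrite /hom_of_vec mxvecK.
have Hcoord : klinear (fun u => gW (h (fV u))).
  exact: klinear_comp (klinear_comp HfV Hh) HgW.
by rewrite -(matrix_ofE Hcoord) gVK gWK.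
Qed.

Lemma hom_of_vecK v : vec_of_hom (hom_of_vec v) = v.
Proof.
rewrite /vec_of_hom /hom_of_vec; apply: (can_inj vec_mxK); rewrite mxvecK.
by apply/row_matrixP => i; rewrite rowK fWK fVK rowE.
Qed.
End HomCoordinates.

(* If linear operators Lop : Hom(V,W2) -> Hom(V,W1) and
   Rop : Hom(V,W1) -> Hom(V,W2) satisfy Lop (Rop h) = h, then also
   Rop (Lop g) = g: both Hom-modules are free of rank n*r. *)
Section HomInverse.
Variables (k : comPzRingType) (V W1 W2 : lmodType k) (n r : nat).
Hypotheses (freeV : free_of_rank V n)
           (freeW1 : free_of_rank W1 r) (freeW2 : free_of_rank W2 r).
Variables (Lop : (V -> W2) -> V -> W1) (Rop : (V -> W1) -> V -> W2).
Hypotheses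
  (Lop_linear : forall g, klinear g -> klinear (Lop g))
  (Rop_linear : forall h, klinear h -> klinear (Rop h))
  (LopD : forall c g1 g2,
     Lop (fun a => c *: g1 a + g2 a) = fun a => c *: Lop g1 a + Lop g2 a)
  (RopD : forall c h1 h2,
     Rop (fun a => c *: h1 a + h2 a) = fun a => c *: Rop h1 a + Rop h2 a)
  (RopK : forall h, klinear h -> Lop (Rop h) = h).

Lemma hom_right_inverse_is_inverse g : klinear g -> Rop (Lop g) = g.
Proof.
move=> Hg.
have [fV [HfV bijV]] := freeV; have [gV [HgV fVK gVK]] := free_coordinates HfV bijV.
have [f1 [Hf1 bij1]] := freeW1; have [g1 [Hg1 f1K g1K]] := free_coordinates Hf1 bij1.
have [f2 [Hf2 bij2]] := freeW2; have [g2 [Hg2 f2K g2K]] := free_coordinates Hf2 bij2.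
pose hom1 := hom_of_vec gV f1; pose vec1 := vec_of_hom fV g1.
pose hom2 := hom_of_vec gV f2; pose vec2 := vec_of_hom fV g2.
pose T v := vec1 (Lop (hom2 v)); pose U w := vec2 (Rop (hom1 w)).
have hom1_lin w : klinear (hom1 w) by apply: hom_of_vec_linear.
have hom2_lin v : klinear (hom2 v) by apply: hom_of_vec_linear.
have HT : klinear T.
  by move=> c v w; rewrite /T /hom2 hom_of_vecD // LopD /vec1 vec_of_homD.
have HU : klinear U.
  by move=> c v w; rewrite /U /hom1 hom_of_vecD // RopD /vec2 vec_of_homD.
have UK : cancel U T.
  move=> w; rewrite /T /U /hom2 /vec2 vec_of_homK //; last exact: Rop_linear.
  by rewrite RopK // /vec1 /hom1 hom_of_vecK.
have := square_right_inverse HT HU UK (vec2 g).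
rewrite /T /U /hom2 /vec2 vec_of_homK // /hom1 /vec1 vec_of_homK //;
  last exact: Lop_linear.
move=> /(congr1 hom2); rewrite /hom2 !vec_of_homK //.
by apply: Rop_linear; apply: Lop_linear.
Qed.
End HomInverse.

Section SemiHopfCategory.
Variables (k : comPzRingType) (X : Type) (A : X -> X -> lmodType k)
  (m : forall x y z, A x y -> A y z -> A x z) (unit : forall x, A x x)
  (delta : forall x y, A x y -> seq (A x y * A x y))
  (eps : forall x y, A x y -> k).
Hypothesis HA : is_semiHopf_category m unit delta eps.
Variable s : forall x y, A x y -> A y x.
Hypothesis Hs : is_right_antipode m unit delta eps s.

Lemma m_linear_r x y z (u : A x y) : klinear (@m x y z u).
Proof. by case: HA => [[[Hm _ _ _] _] _ _ _ _]; case: (Hm x y z). Qed.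
Lemma m_linear_l x y z (v : A y z) : klinear (fun u : A x y => m u v).
Proof. by case: HA => [[[Hm _ _ _] _] _ _ _ _]; case: (Hm x y z). Qed.
Lemma mA x y z w (a : A x y) (b : A y z) (c : A z w) :
  m (m a b) c = m a (m b c).
Proof. by case: HA => [[[_ H _ _] _] _ _ _ _]. Qed.
Lemma mul1m x y (a : A x y) : m (unit x) a = a.
Proof. by case: HA => [[[_ _ H _] _] _ _ _ _]. Qed.
Lemma mulm1 x y (a : A x y) : m a (unit y) = a.
Proof. by case: HA => [[[_ _ _ H] _] _ _ _ _]. Qed.
Lemma delta_coalgebra x y : is_coalgebra (@delta x y) (@eps x y).
Proof. by case: HA => [[_ H] _ _ _ _]. Qed.
Lemma s_linear x y : klinear (@s x y).
Proof. by case: Hs. Qed.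
Lemma eps_form x y : kform (@eps x y).
Proof. by case: (delta_coalgebra x y). Qed.

Lemma klinear_delta x y (B : lmodType k) (b : A x y -> A x y -> B) :
  kbilinear b -> klinear (fun a => \sum_(p <- delta a) b p.1 p.2).
Proof.
move=> Hb c a a'; case: (delta_coalgebra x y) => Hd _ _ _ _.
rewrite (Hd c a a' B b Hb) big_cat big_map /= scaler_sumr; congr (_ + _).
by apply: eq_bigr => p _; rewrite (klinearZ (Hb.2 p.2)).
Qed.

Variables x y : X.

Definition Lconv (g : A x y -> A y y) : A x y -> A x y :=
  fun a => \sum_(p <- delta a) m p.1 (g p.2).
Definition Sconv (h : A x y -> A x y) : A x y -> A y y :=
  fun a => \sum_(p <- delta a) m (s p.1) (h p.2).

Lemma Lconv_linear g : klinear g -> klinear (Lconv g).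
Proof.
move=> Hg; apply: (klinear_delta (b := fun u v => m u (g v))); split.
  by move=> u; apply: klinear_comp Hg (m_linear_r _).
by move=> v; apply: m_linear_l.
Qed.

Lemma Sconv_linear h : klinear h -> klinear (Sconv h).
Proof.
move=> Hh; apply: (klinear_delta (b := fun u v => m (s u) (h v))); split.
  by move=> u; apply: klinear_comp Hh (m_linear_r _).
by move=> v; exact: klinear_comp (@s_linear x y) (m_linear_l (h v)).
Qed.

Lemma LconvD c g1 g2 :
  Lconv (fun a => c *: g1 a + g2 a) = fun a => c *: Lconv g1 a + Lconv g2 a.
Proof.
apply: functional_extensionality => a; rewrite /Lconv scaler_sumr -big_split.
by apply: eq_bigr => p _; rewrite (m_linear_r _).
Qed.

Lemma SconvD c h1 h2 :
  Sconv (fun a => c *: h1 a + h2 a) = fun a => c *: Sconv h1 a + Sconv h2 a.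
Proof.
apply: functional_extensionality => a; rewrite /Sconv scaler_sumr -big_split.
by apply: eq_bigr => p _; rewrite (m_linear_r _).
Qed.

(* S is a right inverse of L: by coassociativity and the right antipode,
   sum a(1) s(a(2)) h(a(3)) = sum eps(a(1)) h(a(2)) = h a. *)
Lemma SconvK h : klinear h -> Lconv (Sconv h) = h.
Proof.
move=> Hh; apply: functional_extensionality => a; rewrite /Lconv /Sconv.
case: (delta_coalgebra x y) => _ _ coassoc counit_l _.
have Htri : ktrilinear (fun (u v : A x y) w => m u (m (s v) (h w))).
  split; first by move=> u v; apply: klinear_comp (m_linear_r _);
    apply: klinear_comp Hh (m_linear_r _).
  split; first by move=> u w; apply: klinear_comp (m_linear_r _);
    apply: klinear_comp (@s_linear _ _) (m_linear_l _).
  by move=> v w; apply: m_linear_l.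
transitivity (\sum_(t <- [seq (p.1, q.1, q.2) | p <- delta a, q <- delta p.2])
   m t.1.1 (m (s t.1.2) (h t.2))).
  by rewrite big_allpairs_dep; apply: eq_bigr => p _; rewrite (klinear_sum (m_linear_r _)).
rewrite -(coassoc a _ _ Htri) big_allpairs_dep /=.
rewrite -[in RHS](counit_l a) (klinear_sum Hh); apply: eq_bigr => p _.
under eq_bigr do rewrite -mA.
by rewrite -(klinear_sum (m_linear_l _)) (proj2 Hs) (klinearZ (m_linear_l _)) mul1m (klinearZ Hh).
Qed.

Lemma Lconv_counit : Lconv (fun a => eps a *: unit y) = id.
Proof.
apply: functional_extensionality => a; rewrite /Lconv.
case: (delta_coalgebra x y) => _ _ _ _ counit_r.
rewrite -{2}(counit_r a); apply: eq_bigr => p _.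
by rewrite (klinearZ (m_linear_r _)) mulm1.
Qed.

Lemma left_antipode_at
  (Hrank : (exists a : A x y, a != 0) ->
     exists n, free_of_rank (A x y) n /\ free_of_rank (A y y) n) (a : A x y) :
  \sum_(p <- delta a) m (s p.1) p.2 = eps a *: unit y.
Proof.
have [nz|zero] := classic (exists a : A x y, a != 0); last first.
  have all0 (b : A x y) : b = 0.
    by case: (eqVneq b 0) => // nb; exfalso; apply: zero; exists b.
  rewrite big1 => [|p _]; last by rewrite (all0 p.1) (klinear0 (@s_linear x y))
    (klinear0 (m_linear_l p.2)).
  by rewrite (all0 a) (kform0 (@eps_form x y)) scale0r.
have [n [freeAxy freeAyy]] := Hrank nz.
have counit_linear : klinear (fun b : A x y => eps b *: unit y).
  by move=> c u v; rewrite (eps_form) scalerDl scalerA.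
have SL := hom_right_inverse_is_inverse freeAxy freeAxy freeAyy
  Lconv_linear Sconv_linear LconvD SconvD SconvK counit_linear.
by have := congr1 (fun F => F a) SL; rewrite Lconv_counit.
Qed.
End SemiHopfCategory.

Theorem mainTheorem9 (k : comPzRingType) (Hk : fgproj_free k)
  (X : Type) (A : X -> X -> lmodType k)
  (m : forall x y z, A x y -> A y z -> A x z) (unit : forall x, A x x)
  (delta : forall x y, A x y -> seq (A x y * A x y))
  (eps : forall x y, A x y -> k)
  (HA : is_semiHopf_category m unit delta eps)
  (Hfg : forall x y, fg_projective (A x y))
  (Hrank : forall x y, (exists a : A x y, a != 0) ->
     exists n, free_of_rank (A x y) n /\ free_of_rank (A y y) n)
  (s : forall x y, A x y -> A y x)
  (Hs : is_right_antipode m unit delta eps s) :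
  is_left_antipode m unit delta eps s /\ is_antipode m unit delta eps s /\
  is_Hopf_category m unit delta eps.
Proof.
have Hl : is_left_antipode m unit delta eps s.
  split; first by case: Hs.
  by move=> x y a; exact: (left_antipode_at HA Hs (Hrank x y) a).
have Hanti : is_antipode m unit delta eps s by [].
by do !split=> //; exists s.
Qed.
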